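(* Let $A,B,C$ be type expressions. (1) If $\bullet A\cong B\to C$, then $A\cong C\cong\top$. (2) If $\bullet A\simeq B\to C$, then either (a) $A\simeq C\simeq\top$, or (b) there exist type expressions $D,E$ with $A\simeq D\to E$, $\bullet D\simeq B$ and $\bullet E\simeq C$.
   Context: Type expressions: fix a countably infinite set of type variables $X,Y,Z,\dots$. Pseudo type expressions are generated by $A::=X\mid A\to A\mid \bullet A\mid \mu X.A$ ($\mu$ binds $X$; $\alpha$-convertible expressions are identified; $\to$ associates to the right; $\bullet$ binds tighter than $\to$, which binds tighter than $\mu$). $A[B/X]$ denotes capture-avoiding substitution. $\top$ abbreviates $\mu X.\bullet X$, and $\bullet^n A$ denotes $A$ prefixed by $n$ copies of $\bullet$. The tail $t(A)$ is defined by $t(X)=X$, $t(A\to B)=t(B)$, $t(\bullet A)=\bullet t(A)$, $t(\mu X.A)=\mu X.t(A)$; it always has the form $\bullet^{m_0}\mu X_1.\bullet^{m_1}\mu X_2.\cdots\mu X_n.\bullet^{m_n}Y$. $A$ is a $\top$-variant iff $Y=X_i$ for some $1\le i\le n$ with $X_i\notin\{X_{i+1},\dots,X_n\}$ and $m_i+\dots+m_n\ge 1$. $A$ is proper in $X$ iff: a variable $Y$ is proper in $X$ iff $Y\neq X$; $\bullet A$ is always proper in $X$; $A\to B$ is proper in $X$ iff both $A,B$ are proper in $X$ or $B$ is a $\top$-variant; for $Y\ne X$, $\mu Y.A$ is proper in $X$ iff $A$ is proper in $X$ or $\mu Y.A$ is a $\top$-variant. Type expressions are the least set of pseudo type expressions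 containing all type variables, closed under $\to$ and $\bullet$, and containing $\mu X.A$ whenever it contains $A$ and $A$ is proper in $X$. Equality: $\cong$ is the least relation on type expressions such that: $A\cong A$; $A\cong B$ implies $B\cong A$; $A\cong B$ and $B\cong C$ imply $A\cong C$; $A\cong B$ implies $\bullet A\cong\bullet B$; $A\cong C$ and $B\cong D$ imply $A\to B\cong C\to D$; $A\to\top\cong\top$; $\mu X.A\cong A[\mu X.A/X]$; and if $A\cong C[A/X]$ with $C$ proper in $X$, then $A\cong\mu X.C$. $\simeq$ is the least relation satisfying the same closure conditions and additionally $\bullet(A\to B)\simeq\bullet A\to\bullet B$. *)

(* Type expressions with mu-binders, represented with
   de Bruijn indices so that alpha-convertible expressions are identified. *)
From Stdlib Require Import Arith.

Inductive ty : Type :=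
| TVar : nat -> ty
| TArr : ty -> ty -> ty
| TLat : ty -> ty           (* bullet A *)
| TMu  : ty -> ty.          (* mu X. A ; index 0 in the body is X *)

Fixpoint shift (d c : nat) (A : ty) : ty :=
  match A with
  | TVar n => if n <? c then TVar n else TVar (n + d)
  | TArr A1 A2 => TArr (shift d c A1) (shift d c A2)
  | TLat A1 => TLat (shift d c A1)
  | TMu A1 => TMu (shift d (S c) A1)
  end.

(* capture-avoiding substitution of B for index k (free indices above k
   are decremented, since the binder of k disappears) *)
Fixpoint subst (k : nat) (B : ty) (A : ty) : ty :=
  match A with
  | TVar n => if n <? k then TVar n
              else if n =? k then shift k 0 B
              else TVar (pred n)
  | TArr A1 A2 => TArr (subst k B A1) (subst k B A2)
  | TLat A1 => TLat (subst k B A1)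
  | TMu A1 => TMu (subst (S k) B A1)
  end.

(* C[A/X] where C is the body of a binder mu X. C *)
Definition subst0 (C A : ty) : ty := subst 0 A C.

Definition top : ty := TMu (TLat (TVar 0)).

Fixpoint bullets (n : nat) (A : ty) : ty :=
  match n with 0 => A | S m => TLat (bullets m A) end.

Fixpoint tail (A : ty) : ty :=
  match A with
  | TVar n => TVar n
  | TArr _ B => tail B
  | TLat A1 => TLat (tail A1)
  | TMu A1 => TMu (tail A1)
  end.

(* Information about the final variable Y of a tail
   bullet^{m0} mu X1. ... mu Xn. bullet^{mn} Y :
   - TBound g : Y is bound by one of the X_i (the innermost binder of that
     name, i.e. X_i not in {X_{i+1},...,X_n}), and g says whether
     m_i + ... + m_n >= 1;
   - TFree j b : Y is not bound inside, it lies j binders outside, and b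
     records whether a bullet was seen. *)
Inductive tinfo : Type :=
| TBound : bool -> tinfo
| TFree : nat -> bool -> tinfo.

Fixpoint tail_info (T : ty) : tinfo :=
  match T with
  | TVar n => TFree n false
  | TArr _ B => tail_info B
  | TLat T1 => match tail_info T1 with
               | TBound g => TBound g
               | TFree j _ => TFree j true
               end
  | TMu T1 => match tail_info T1 with
              | TBound g => TBound g
              | TFree 0 b => TBound b
              | TFree (S j) b => TFree j b
              end
  end.

Definition top_variant (A : ty) : Prop := tail_info (tail A) = TBound true.

Fixpoint proper (k : nat) (A : ty) : Prop :=
  match A with
  | TVar n => n <> k
  | TLat _ => True
  | TArr A1 A2 => (proper k A1 /\ proper k A2) \/ top_variant A2
  | TMu A1 => proper (S k) A1 \/ top_variant (TMu A1)
  end.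

Inductive wf : ty -> Prop :=
| wf_var : forall n, wf (TVar n)
| wf_arr : forall A B, wf A -> wf B -> wf (TArr A B)
| wf_lat : forall A, wf A -> wf (TLat A)
| wf_mu : forall A, wf A -> proper 0 A -> wf (TMu A).

Inductive eqty (distr : bool) : ty -> ty -> Prop :=
| eq_refl : forall A, wf A -> eqty distr A A
| eq_sym : forall A B, eqty distr A B -> eqty distr B A
| eq_trans : forall A B C, eqty distr A B -> eqty distr B C -> eqty distr A C
| eq_lat : forall A B, eqty distr A B -> eqty distr (TLat A) (TLat B)
| eq_arr : forall A B C D, eqty distr A C -> eqty distr B D ->
    eqty distr (TArr A B) (TArr C D)
| eq_arr_top : forall A, wf A -> eqty distr (TArr A top) top
| eq_unfold : forall A, wf (TMu A) -> wf (subst0 A (TMu A)) ->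
    eqty distr (TMu A) (subst0 A (TMu A))
| eq_contract : forall A C, wf A -> wf (TMu C) -> wf (subst0 C A) ->
    proper 0 C -> eqty distr A (subst0 C A) -> eqty distr A (TMu C)
| eq_distr : forall A B, distr = true -> wf A -> wf B ->
    eqty distr (TLat (TArr A B)) (TArr (TLat A) (TLat B)).

Notation cong := (eqty false).
Notation simeq := (eqty true).

(* Types are interpreted by finite approximations of their infinite unfoldings
   ([sem]): trees cut below a given number of nested bullets, with [A -> top]
   collapsed to [top] and, for the second equality, bullets distributed over
   arrows.  Both equalities are sound for this interpretation, and a type is
   interpreted as [top] at every level exactly when it is a top-variant.

   For [cong] a bullet is never interpreted as an arrow, so [TLat A = TArr B C]
   forces [C], and then [A], to be top-variants.  For [simeq], if [C] is not a
   top-variant the interpretation of [TArr B C] is a distributed bullet, so no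
   variable of [B] or [C] occurs outside a bullet ([guarded]).  On guarded types
   the syntactic operation [unbullet] strips one bullet, [TLat (unbullet M)] equals
   [M], and [unbullet] respects equality; this makes bullet injective and yields
   [D := unbullet B] and [E := unbullet C]. *)

From Stdlib Require Import Arith Lia Bool.

Ltac nat_cases := repeat (simpl in *; match goal with
  | |- context [?a <? ?b] => destruct (Nat.ltb_spec a b)
  | |- context [?a =? ?b] => destruct (Nat.eqb_spec a b)
  end); simpl in *; try (f_equal; lia); try lia.

(** * Shifting and substitution *)

Lemma shift_shift_merge M d c k e : e <= c -> c <= e + k ->
  shift d c (shift k e M) = shift (d + k) e M.
Proof.
  revert d c k e; induction M; intros d c k e H1 H2; simpl;
    [nat_cases | rewrite IHM1, IHM2 | rewrite IHM | rewrite IHM]; auto; lia.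
Qed.

Lemma shift_shift_comm T d k e c : e <= c ->
  shift d (k + c) (shift k e T) = shift k e (shift d c T).
Proof.
  revert d k e c; induction T; intros d k e c H; simpl.
  - nat_cases.
  - rewrite IHT1, IHT2; auto.
  - rewrite IHT; auto.
  - replace (S (k + c)) with (k + S c) by lia. rewrite IHT by lia. reflexivity.
Qed.

Lemma subst_shift_cancel M T c0 c d : c0 <= c -> c <= c0 + d ->
  subst c T (shift (S d) c0 M) = shift d c0 M.
Proof.
  revert T c0 c d; induction M; intros T c0 c d H1 H2; simpl;
    [nat_cases | rewrite IHM1, IHM2 | rewrite IHM | rewrite IHM]; auto; lia.
Qed.

Lemma subst_shift M U k d c : c <= k ->
  subst (k + d) U (shift d c M) = shift d c (subst k U M).
Proof.
  revert U k d c; induction M; intros U k d c H; simpl.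
  - nat_cases. rewrite shift_shift_merge by lia. f_equal; lia.
  - f_equal; auto.
  - f_equal; auto.
  - rewrite <- IHM by lia. reflexivity.
Qed.

Lemma subst_subst M U T k c :
  subst (c + k) U (subst c T M) = subst c (subst k U T) (subst (S (c + k)) U M).
Proof.
  revert U T k c; induction M; intros U T k c; simpl.
  - nat_cases.
    + subst. rewrite <- subst_shift by lia. f_equal; lia.
    + replace n with (S (c + k)) by lia. rewrite subst_shift_cancel by lia. reflexivity.
  - f_equal; auto.
  - f_equal; auto.
  - rewrite <- IHM. reflexivity.
Qed.

Lemma shift_subst M T d c0 c :
  shift d (c0 + c) (subst c0 T M) = subst c0 (shift d c T) (shift d (S (c0 + c)) M).
Proof.
  revert T d c0 c; induction M; intros T d c0 c; simpl.
  - nat_cases. apply shift_shift_comm; lia.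
  - f_equal; auto.
  - f_equal; auto.
  - rewrite <- IHM. reflexivity.
Qed.

Lemma shift_subst0 A T d c :
  shift d c (subst0 A T) = subst0 (shift d (S c) A) (shift d c T).
Proof. exact (shift_subst A T d 0 c). Qed.

Lemma subst_subst0 A T k U :
  subst k U (subst0 A T) = subst0 (subst (S k) U A) (subst k U T).
Proof. exact (subst_subst A U T k 0). Qed.

(** * Tails, properness and well-formedness *)

Definition tinfo_of (M : ty) : tinfo := tail_info (tail M).

Lemma tinfo_of_var n : tinfo_of (TVar n) = TFree n false.
Proof. reflexivity. Qed.

Lemma tinfo_of_arr A B : tinfo_of (TArr A B) = tinfo_of B.
Proof. reflexivity. Qed.

Lemma tinfo_of_lat A : tinfo_of (TLat A) =
  match tinfo_of A with TBound g => TBound g | TFree j _ => TFree j true end.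
Proof. reflexivity. Qed.

Lemma tinfo_of_mu A : tinfo_of (TMu A) =
  match tinfo_of A with
  | TBound g => TBound g | TFree 0 b => TBound b | TFree (S j) b => TFree j b
  end.
Proof. reflexivity. Qed.

Lemma top_variantE M : top_variant M <-> tinfo_of M = TBound true.
Proof. reflexivity. Qed.

Lemma tinfo_of_shift M d c : tinfo_of (shift d c M) =
  match tinfo_of M with
  | TBound g => TBound g | TFree j b => TFree (if j <? c then j else j + d) b
  end.
Proof.
  revert d c; induction M; intros d c; simpl shift.
  - unfold tinfo_of; simpl. destruct (n <? c); reflexivity.
  - rewrite !tinfo_of_arr; auto.
  - rewrite !tinfo_of_lat, IHM. destruct (tinfo_of M); reflexivity.
  - rewrite !tinfo_of_mu, IHM. destruct (tinfo_of M) as [g|[|j] b]; auto.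
    nat_cases; reflexivity.
Qed.

Lemma tinfo_of_subst M k U : tinfo_of (subst k U M) =
  match tinfo_of M with
  | TBound g => TBound g
  | TFree j b =>
      if j <? k then TFree j b
      else if j =? k then
        match tinfo_of U with
        | TBound g => TBound g | TFree i b' => TFree (i + k) (b || b')
        end
      else TFree (pred j) b
  end.
Proof.
  revert k; induction M; intros k; simpl subst.
  - rewrite tinfo_of_var. nat_cases; auto.
    rewrite tinfo_of_shift. destruct (tinfo_of U); auto.
  - rewrite !tinfo_of_arr; auto.
  - rewrite !tinfo_of_lat, IHM. destruct (tinfo_of M) as [g|j b]; auto.
    nat_cases; auto. destruct (tinfo_of U); auto.
  - rewrite !tinfo_of_mu, IHM. destruct (tinfo_of M) as [g|[|j] b]; auto; nat_cases; auto.
    + destruct (tinfo_of U) as [g|i b']; auto. rewrite Nat.add_succ_r. reflexivity.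
    + destruct j; [lia | reflexivity].
Qed.

Lemma top_variant_shift M d c : top_variant M -> top_variant (shift d c M).
Proof. rewrite !top_variantE, tinfo_of_shift. intros ->. reflexivity. Qed.

Lemma top_variant_subst M k U : top_variant M -> top_variant (subst k U M).
Proof. rewrite !top_variantE, tinfo_of_subst. intros ->. reflexivity. Qed.

Lemma proper_shift M p d c : proper p M ->
  proper (if p <? c then p else p + d) (shift d c M).
Proof.
  revert p d c; induction M; intros p d c H; simpl in *.
  - nat_cases.
  - destruct H as [[H1 H2]|H]; [left | right; apply top_variant_shift]; auto.
  - auto.
  - destruct H as [H|H]; [left | right; apply (top_variant_shift (TMu M))]; auto.
    specialize (IHM (S p) d (S c) H).
    destruct (Nat.ltb_spec p c), (Nat.ltb_spec (S p) (S c)); auto; lia.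
Qed.

Lemma proper_shift_gap M p d c : c <= p -> p < c + d -> proper p (shift d c M).
Proof.
  revert p d c; induction M; intros p d c H1 H2; simpl.
  - nat_cases.
  - left; split; auto.
  - exact I.
  - left; apply IHM; lia.
Qed.

Lemma proper_subst M p k U : p < k -> proper p M -> proper p (subst k U M).
Proof.
  revert p k; induction M; intros p k H1 H; simpl in *.
  - nat_cases. apply proper_shift_gap; lia.
  - destruct H as [[H2 H3]|H]; [left | right; apply top_variant_subst]; auto.
  - auto.
  - destruct H as [H|H]; [left | right; apply (top_variant_subst (TMu M))]; auto with arith.
Qed.

Lemma wf_shift M d c : wf M -> wf (shift d c M).
Proof.
  intros H; revert d c; induction H; intros d c; simpl.
  - destruct (n <? c); constructor.
  - constructor; auto.
  - constructor; auto.
  - constructor; auto. exact (proper_shift A 0 d (S c) H0).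
Qed.

Lemma wf_subst M k U : wf U -> wf M -> wf (subst k U M).
Proof.
  intros HU H; revert k; induction H; intros k; simpl.
  - nat_cases; constructor || apply wf_shift; auto.
  - constructor; auto.
  - constructor; auto.
  - constructor; auto. apply proper_subst; auto with arith.
Qed.

Lemma wf_top : wf top.
Proof. repeat constructor. Qed.

Lemma wf_mu_inv A : wf (TMu A) -> wf A /\ proper 0 A.
Proof. intros H; inversion H; auto. Qed.

Lemma wf_lat_inv A : wf (TLat A) -> wf A.
Proof. intros H; inversion H; auto. Qed.

Lemma wf_unfold A : wf (TMu A) -> wf (subst0 A (TMu A)).
Proof. intros H. apply wf_subst; [exact H | apply wf_mu_inv, H]. Qed.

(** * Derived rules of the equalities *)

Lemma eqty_wf d A B : eqty d A B -> wf A /\ wf B.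
Proof. induction 1; intuition; repeat constructor; auto. Qed.

Lemma eqty_shift d A B : eqty d A B -> forall n c, eqty d (shift n c A) (shift n c B).
Proof.
  induction 1; intros n c; simpl.
  - apply eq_refl, wf_shift; auto.
  - apply eq_sym; auto.
  - eapply eq_trans; eauto.
  - apply eq_lat; auto.
  - apply eq_arr; auto.
  - apply eq_arr_top, wf_shift; auto.
  - rewrite shift_subst0. apply (eq_unfold d (shift n (S c) A)).
    + apply (wf_shift (TMu A)); auto.
    + change (TMu (shift n (S c) A)) with (shift n c (TMu A)).
      rewrite <- shift_subst0. apply wf_shift; auto.
  - apply eq_contract; rewrite <- ?shift_subst0; auto using wf_shift.
    + apply (wf_shift (TMu C)); auto.
    + exact (proper_shift C 0 n (S c) H2).
  - apply eq_distr; auto using wf_shift.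
Qed.

Lemma eqty_subst d A B : eqty d A B -> forall k U, wf U ->
  eqty d (subst k U A) (subst k U B).
Proof.
  induction 1; intros k U HU; simpl.
  - apply eq_refl, wf_subst; auto.
  - apply eq_sym; auto.
  - eapply eq_trans; eauto.
  - apply eq_lat; auto.
  - apply eq_arr; auto.
  - apply eq_arr_top, wf_subst; auto.
  - rewrite subst_subst0. apply (eq_unfold d (subst (S k) U A)).
    + apply (wf_subst (TMu A)); auto.
    + change (TMu (subst (S k) U A)) with (subst k U (TMu A)).
      rewrite <- subst_subst0. apply wf_subst; auto.
  - apply eq_contract; rewrite <- ?subst_subst0; auto using wf_subst.
    + apply (wf_subst (TMu C)); auto.
    + apply proper_subst; auto with arith.
  - apply eq_distr; auto using wf_subst.
Qed.

Lemma eqty_mu d C1 C2 : wf (TMu C1) -> wf (TMu C2) -> eqty d C1 C2 ->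
  eqty d (TMu C1) (TMu C2).
Proof.
  intros H1 H2 H. destruct (wf_mu_inv C2 H2) as [HC2 P2].
  apply eq_contract; auto.
  - apply wf_subst; auto.
  - eapply eq_trans; [apply eq_unfold; auto using wf_unfold | apply eqty_subst; auto].
Qed.

Lemma eqty_subst_r M d k X Y : wf M -> eqty d X Y ->
  eqty d (subst k X M) (subst k Y M).
Proof.
  intros HM; revert d k; induction HM; intros d k HXY;
    destruct (eqty_wf _ _ _ HXY) as [HX HY]; simpl.
  - nat_cases; first [apply eqty_shift; assumption | apply eq_refl; constructor].
  - apply eq_arr; auto.
  - apply eq_lat; auto.
  - apply eqty_mu; auto; apply (wf_subst (TMu A)); auto; constructor; auto.
Qed.

Lemma top_unfold d : eqty d top (TLat top).
Proof. apply (eq_unfold d (TLat (TVar 0))); repeat constructor. Qed.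

Lemma eqty_lat_top d A : eqty d A top -> eqty d (TLat A) top.
Proof. intros H. eapply eq_trans; [apply eq_lat, H | apply eq_sym, top_unfold]. Qed.

Lemma eqty_arr_top d A B : wf A -> eqty d B top -> eqty d (TArr A B) top.
Proof.
  intros HA H.
  eapply eq_trans; [apply eq_arr, H; apply eq_refl, HA | apply eq_arr_top, HA].
Qed.

Lemma eqty_mu_top d C : wf (TMu C) -> eqty d (subst0 C top) top -> eqty d (TMu C) top.
Proof.
  intros H1 H. destruct (wf_mu_inv C H1) as [HC P].
  apply eq_sym, eq_contract; auto using wf_top, eq_sym.
  apply wf_subst; auto using wf_top.
Qed.

(* The free-variable case loads the induction: under a [mu] the tail variable may be bound. *)
Lemma tail_eqty_top M d : wf M ->
  (tinfo_of M = TBound true -> eqty d M top) /\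
  (forall j b, tinfo_of M = TFree j b -> eqty d (subst j top M) top).
Proof.
  intros HM; induction HM; split;
    rewrite ?tinfo_of_var, ?tinfo_of_arr, ?tinfo_of_lat, ?tinfo_of_mu; simpl.
  - discriminate.
  - intros j b [= -> _]. rewrite Nat.ltb_irrefl, Nat.eqb_refl. apply eq_refl, wf_top.
  - intros H. apply eqty_arr_top, IHHM2; auto.
  - intros j b H. apply eqty_arr_top; [apply wf_subst, HM1; apply wf_top |].
    eapply IHHM2, H.
  - destruct (tinfo_of A) eqn:E; intros [= ->]. apply eqty_lat_top, IHHM. reflexivity.
  - destruct (tinfo_of A) eqn:E; intros j' b' [= <- _]. eapply eqty_lat_top, IHHM. reflexivity.
  - intros Ht. apply eqty_mu_top; [constructor; auto |].
    destruct (tinfo_of A) as [g|[|j] b] eqn:E; try discriminate.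
    + injection Ht as ->. apply (eqty_subst _ _ _ (proj1 IHHM Logic.eq_refl) 0 top wf_top).
    + eapply IHHM. reflexivity.
  - intros j b Ht.
    apply eqty_mu_top; [apply (wf_subst (TMu A)); [apply wf_top | constructor; auto] |].
    destruct (tinfo_of A) as [g|[|j'] b'] eqn:E; try discriminate.
    injection Ht as -> ->.
    exact (eqty_subst _ _ _ (proj2 IHHM _ _ Logic.eq_refl) 0 top wf_top).
Qed.

Lemma top_variant_eqty_top d M : wf M -> top_variant M -> eqty d M top.
Proof. intros HM H. exact (proj1 (tail_eqty_top M d HM) H). Qed.

Lemma top_variants_eqty d A C : wf A -> wf C -> top_variant A -> top_variant C ->
  eqty d A C /\ eqty d C top.
Proof.
  intros HA HC TA TC. split; [eapply eq_trans; [| apply eq_sym] |];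
    apply top_variant_eqty_top; auto.
Qed.

(** * Approximation trees *)

Inductive tree : Type :=
| Cut
| Leaf (v : nat)
| Node (a b : tree)
| Later (t : tree).

Definition tree_eq_dec (a b : tree) : {a = b} + {a <> b}.
Proof. decide equality. apply Nat.eq_dec. Defined.

Fixpoint ttop (n : nat) : tree :=
  match n with 0 => Cut | S m => Later (ttop m) end.

Definition tarr (n : nat) (a b : tree) : tree :=
  if tree_eq_dec b (ttop n) then b else Node a b.

Fixpoint later_distr (t : tree) : tree :=
  match t with Node a b => Node (later_distr a) (later_distr b) | _ => Later t end.

Definition tlater (d : bool) (t : tree) : tree := if d then later_distr t else Later t.

Fixpoint trunc (n : nat) (t : tree) : tree :=
  match t with
  | Cut => Cut
  | Leaf k => Leaf k
  | Node a b => tarr n (trunc n a) (trunc n b)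
  | Later t' => match n with 0 => Cut | S m => Later (trunc m t') end
  end.

Definition scons (t : tree) (s : nat -> tree) (k : nat) : tree :=
  match k with 0 => t | S k' => s k' end.

Lemma ttop_not_node n a b : ttop n <> Node a b.
Proof. destruct n; discriminate. Qed.

Lemma ttop_inj n m : ttop n = ttop m -> n = m.
Proof. revert m; induction n; intros [|m] H; inversion H; auto. Qed.

Lemma tarr_cases n a b :
  (b = ttop n /\ tarr n a b = b) \/ (b <> ttop n /\ tarr n a b = Node a b).
Proof. unfold tarr; destruct (tree_eq_dec b (ttop n)); auto. Qed.

Lemma tarr_ttop n a : tarr n a (ttop n) = ttop n.
Proof. unfold tarr; destruct (tree_eq_dec (ttop n) (ttop n)); congruence. Qed.

Lemma trunc_ttop n k : k <= n -> trunc k (ttop n) = ttop k.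
Proof. revert k; induction n; intros [|k] H; simpl; auto; try lia. f_equal; apply IHn; lia. Qed.

Lemma trunc_tarr n k a b : k <= n -> trunc k (tarr n a b) = tarr k (trunc k a) (trunc k b).
Proof.
  intros H. destruct (tarr_cases n a b) as [[-> ->]|[_ ->]]; auto.
  rewrite trunc_ttop, tarr_ttop; auto.
Qed.

Lemma trunc_trunc t n k : k <= n -> trunc k (trunc n t) = trunc k t.
Proof.
  revert n k; induction t; intros n k H; simpl; auto.
  - rewrite trunc_tarr, IHt1, IHt2; auto.
  - destruct n, k; simpl; auto; try lia. f_equal. apply IHt; lia.
Qed.

Lemma trunc_id_le t n m : trunc n t = t -> n <= m -> trunc m t = t.
Proof.
  revert n m; induction t; intros n m H Hm; simpl in *; auto.
  - destruct (tarr_cases n (trunc n t1) (trunc n t2)) as [[E1 E2]|[E1 E2]]; rewrite E2 in H.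
    + exfalso. rewrite H in E1. eapply ttop_not_node; eauto.
    + injection H as H1 H2. rewrite H1, H2 in *. rewrite (IHt1 n m), (IHt2 n m); auto.
      unfold tarr. destruct (tree_eq_dec t2 (ttop m)) as [E|]; auto.
      exfalso. apply E1. rewrite <- H2, E. apply trunc_ttop; auto.
  - destruct n as [|n']; try discriminate. destruct m as [|m']; [lia|].
    injection H as H. f_equal. apply (IHt n'); auto. lia.
Qed.

Lemma later_distr_later t x : later_distr t = Later x -> t = x.
Proof. destruct t; simpl; intros H; inversion H; auto. Qed.

Lemma tlater_ttop d m : tlater d (ttop m) = ttop (S m).
Proof. destruct d, m; reflexivity. Qed.

Lemma tlater_eq_ttop d m t : tlater d t = ttop (S m) -> t = ttop m.
Proof. destruct d; [apply later_distr_later | intros [= ->]; auto]. Qed.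

Lemma later_distr_tarr m a b :
  later_distr (tarr m a b) = tarr (S m) (later_distr a) (later_distr b).
Proof.
  destruct (tarr_cases m a b) as [[-> ->]|[E ->]].
  - replace (later_distr (ttop m)) with (ttop (S m)) by (destruct m; reflexivity).
    symmetry; apply tarr_ttop.
  - unfold tarr. destruct (tree_eq_dec (later_distr b) (ttop (S m))) as [E'|]; auto.
    exfalso. apply E, later_distr_later, E'.
Qed.

Lemma trunc_tlater d t m : trunc (S m) (tlater d t) = tlater d (trunc m t).
Proof.
  destruct d; auto. simpl. induction t; simpl; auto.
  - rewrite IHt1, IHt2. symmetry. apply later_distr_tarr.
  - destruct m; reflexivity.
Qed.

Lemma trunc0_tlater d t : trunc 0 (tlater d t) = Cut.
Proof. destruct d; auto. simpl. induction t; simpl; auto. rewrite IHt1, IHt2. reflexivity. Qed.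

Definition agree (n : nat) (a b : tree) : Prop :=
  match n with 0 => True | S m => trunc m a = trunc m b end.

Lemma agree_refl n a : agree n a a.
Proof. destruct n; simpl; auto. Qed.

Lemma agree_trunc n t : agree n (trunc n t) t.
Proof. destruct n; simpl; auto. apply trunc_trunc; auto. Qed.

Definition contractive (n : nat) (F : tree -> tree) : Prop :=
  forall i t t', i <= n -> agree i t t' -> trunc i (F t) = trunc i (F t').

Lemma contractive_fix_unique F n : contractive n F ->
  forall x y, x = F x -> y = F y -> trunc n x = x -> trunc n y = y -> x = y.
Proof.
  intros HF x y Hx Hy Nx Ny.
  assert (H : forall i, i <= n -> trunc i x = trunc i y).
  { induction i; intros Hi; rewrite Hx, Hy; apply HF; simpl; auto; apply IHi; lia. }
  rewrite <- Nx, <- Ny. apply H; auto.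
Qed.

Lemma contractive_iter_fix F n : contractive n F -> (forall t, trunc n (F t) = F t) ->
  F (Nat.iter (S n) F Cut) = Nat.iter (S n) F Cut.
Proof.
  intros HF HN.
  assert (P : forall i, i <= n -> forall j, i <= j ->
            trunc i (Nat.iter (S j) F Cut) = trunc i (Nat.iter (S (S j)) F Cut)).
  { induction i; intros Hi j Hj; simpl; apply HF; simpl; auto; try lia.
    destruct j as [|j]; [lia|]. apply IHi; lia. }
  specialize (P n (le_n n) n (le_n n)). simpl in P. rewrite !HN in P. symmetry. exact P.
Qed.

(** * Interpretation of types *)

Lemma iter_ext {X : Type} (F G : X -> X) n x :
  (forall t, F t = G t) -> Nat.iter n F x = Nat.iter n G x.
Proof. intros H; induction n; simpl; congruence. Qed.

Section Semantics.

Variable d : bool.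

(* [Cut] marks where an approximation stops; a [mu] is unfolded [S n] times from
   [Cut], which suffices because its body is contractive. *)
Fixpoint sem (n : nat) (s : nat -> tree) (M : ty) {struct M} : tree :=
  match M with
  | TVar k => trunc n (s k)
  | TArr A B => tarr n (sem n s A) (sem n s B)
  | TLat A => match n with 0 => Cut | S m => tlater d (sem m s A) end
  | TMu A => Nat.iter (S n) (fun t => sem n (scons t s) A) Cut
  end.

Lemma trunc_sem M n s : trunc n (sem n s M) = sem n s M.
Proof.
  revert n s; induction M as [x|A IHA B IHB|A IHA|A IHA]; intros n s; simpl.
  - apply trunc_trunc; auto.
  - rewrite trunc_tarr, IHA, IHB; auto.
  - destruct n; auto. rewrite trunc_tlater, IHA; auto.
  - apply IHA.
Qed.

Lemma sem_ext M n s s' : (forall x, trunc n (s x) = trunc n (s' x)) -> sem n s M = sem n s' M.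
Proof.
  revert n s s'; induction M as [x|A IHA B IHB|A IHA|A IHA]; intros n s s' H; simpl; auto.
  - rewrite (IHA n s s'), (IHB n s s'); auto.
  - destruct n; auto. rewrite (IHA n s s'); auto. intros x.
    rewrite <- (trunc_trunc (s x) (S n)), <- (trunc_trunc (s' x) (S n)), H; auto.
  - assert (Hf : forall t, sem n (scons t s) A = sem n (scons t s') A)
      by (intros t; apply IHA; intros [|x]; simpl; auto).
    rewrite (iter_ext _ _ n Cut Hf). apply Hf.
Qed.

Lemma sem_ext_eq M n s s' : (forall x, s x = s' x) -> sem n s M = sem n s' M.
Proof. intros H. apply sem_ext. intros x; rewrite H; auto. Qed.

Definition body_map (n : nat) (s : nat -> tree) (C : ty) (t : tree) : tree := sem n (scons t s) C.

Lemma sem_mu n s C : sem n s (TMu C) = Nat.iter (S n) (body_map n s C) Cut.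
Proof. reflexivity. Qed.

(* A tail variable reached through a bullet ([b = true]) only needs to be [top]
   one level lower. *)
Definition top_cond (b : bool) (n : nat) (a : tree) : Prop :=
  if b then agree n a (ttop n) else trunc n a = ttop n.

Definition sem_tail_top (M : ty) : Prop :=
  (tinfo_of M = TBound true -> forall n s, sem n s M = ttop n) /\
  (forall j b, tinfo_of M = TFree j b -> forall n s, top_cond b n (s j) -> sem n s M = ttop n).

Definition sem_proper (M : ty) : Prop :=
  forall j n s s', proper j M ->
  (forall x, x <> j -> trunc n (s x) = trunc n (s' x)) -> agree n (s j) (s' j) ->
  sem n s M = sem n s' M.

Definition sem_coherent (M : ty) : Prop :=
  forall k n s, k <= n -> trunc k (sem n s M) = sem k s M.

Lemma body_map_contractive C : sem_proper C -> sem_coherent C -> proper 0 C ->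
  forall n s, contractive n (body_map n s C).
Proof.
  intros HG HT HP n s i t t' Hi He. unfold body_map. rewrite !HT by auto.
  apply (HG 0); auto. intros [|x] Hx; simpl; auto. congruence.
Qed.

Lemma sem_mu_fix C : sem_proper C -> sem_coherent C -> proper 0 C ->
  forall n s, body_map n s C (sem n s (TMu C)) = sem n s (TMu C).
Proof.
  intros. apply contractive_iter_fix; [apply body_map_contractive; auto |].
  intros t; apply trunc_sem.
Qed.

Lemma sem_mu_unique C : sem_proper C -> sem_coherent C -> proper 0 C ->
  forall n s x, x = body_map n s C x -> x = sem n s (TMu C).
Proof.
  intros HG HT HP n s x Hx. apply (contractive_fix_unique (body_map n s C) n).
  - apply body_map_contractive; auto.
  - exact Hx.
  - symmetry; apply sem_mu_fix; auto.
  - rewrite Hx. apply trunc_sem.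
  - apply trunc_sem.
Qed.

Lemma top_cond_lat b m a : top_cond true (S m) a -> top_cond b m a.
Proof.
  intros H. change (trunc m a = trunc m (ttop (S m))) in H.
  rewrite trunc_ttop in H by lia. destruct b; unfold top_cond; [| exact H].
  destruct m as [|m']; [exact I |]. unfold agree.
  rewrite <- (trunc_trunc a (S m')), H, !trunc_ttop by lia. reflexivity.
Qed.

(* Proved together: a [mu] needs its body to be contractive ([sem_proper],
   [sem_coherent]), and an arrow into a top-variant needs [sem_tail_top]. *)
Definition sem_spec (M : ty) : Prop := sem_tail_top M /\ sem_proper M /\ sem_coherent M.

Lemma sem_spec_var n : sem_spec (TVar n).
Proof.
  split; [split | split].
  - discriminate.
  - intros j b [= -> <-] m s Hc. exact Hc.
  - intros j m s s' Hp Ho He. apply Ho, Hp.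
  - intros k m s Hk. apply trunc_trunc, Hk.
Qed.

Lemma sem_spec_arr A B : sem_spec A -> sem_spec B -> sem_spec (TArr A B).
Proof.
  intros [_ [GA CA]] [[TB1 TB2] [GB CB]]. split; [split | split]; rewrite ?tinfo_of_arr.
  - intros H n s. simpl. rewrite (TB1 H). apply tarr_ttop.
  - intros j b H n s Hc. simpl. rewrite (TB2 j b H n s Hc). apply tarr_ttop.
  - intros j n s s' [[P1 P2]|P] Ho He; simpl.
    + rewrite (GA j n s s'), (GB j n s s'); auto.
    + rewrite !(TB1 P), !tarr_ttop. reflexivity.
  - intros k n s Hk. simpl. rewrite trunc_tarr, CA, CB; auto.
Qed.

Lemma sem_spec_lat A : sem_spec A -> sem_spec (TLat A).
Proof.
  intros [[TA1 TA2] [GA CA]]. split; [split | split]; rewrite ?tinfo_of_lat.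
  - destruct (tinfo_of A) as [g|j b] eqn:E; intros [= ->] [|n] s; simpl; auto.
    rewrite TA1; auto. apply tlater_ttop.
  - destruct (tinfo_of A) as [g|j' b'] eqn:E; intros j b [= -> <-] [|n] s Hc; simpl; auto.
    rewrite (TA2 j b' Logic.eq_refl n s); [apply tlater_ttop | apply top_cond_lat, Hc].
  - intros j [|n] s s' Hp Ho He; simpl; auto. f_equal. apply sem_ext.
    intros x. destruct (Nat.eq_dec x j) as [->|Hx]; auto.
    rewrite <- (trunc_trunc (s x) (S n)), <- (trunc_trunc (s' x) (S n)), Ho; auto.
  - intros [|k] [|n] s Hk; simpl; auto; try lia.
    + apply trunc0_tlater.
    + rewrite trunc_tlater, CA; auto. lia.
Qed.

Lemma sem_mu_tail_top A : sem_spec A -> proper 0 A -> sem_tail_top (TMu A).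
Proof.
  intros [[TA1 TA2] [GA CA]] HP. split; rewrite tinfo_of_mu.
  - destruct (tinfo_of A) as [g|[|j] b] eqn:E; intros Ht n s; try discriminate.
    + injection Ht as ->. rewrite sem_mu. simpl. apply TA1; auto.
    + injection Ht as ->. symmetry. apply sem_mu_unique; auto.
      unfold body_map. symmetry. apply (TA2 0 true Logic.eq_refl). apply agree_refl.
  - destruct (tinfo_of A) as [g|[|j'] b'] eqn:E; intros j b Ht n s Hc; try discriminate.
    injection Ht as -> ->. rewrite sem_mu. simpl. apply (TA2 (S j) b Logic.eq_refl), Hc.
Qed.

Lemma sem_spec_mu A : sem_spec A -> proper 0 A -> sem_spec (TMu A).
Proof.
  intros SA HP. pose proof (sem_mu_tail_top A SA HP) as TV. destruct SA as [_ [GA CA]].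
  split; [exact TV | split].
  - intros j n s s' [P|P] Ho He.
    + rewrite !sem_mu. apply iter_ext. intros t. apply (GA (S j)); auto.
      intros [|x] Hx; simpl; auto.
    + rewrite !(proj1 TV P). reflexivity.
  - intros k n s Hk. apply sem_mu_unique; auto. unfold body_map.
    rewrite (GA 0 k (scons (trunc k (sem n s (TMu A))) s) (scons (sem n s (TMu A)) s)); auto.
    + rewrite <- (CA k n) by auto. fold (body_map n s A (sem n s (TMu A))).
      rewrite sem_mu_fix; auto.
    + intros [|x] Hx; simpl; auto. lia.
    + apply agree_trunc.
Qed.

Lemma wf_sem_spec M : wf M -> sem_spec M.
Proof.
  induction 1; auto using sem_spec_var, sem_spec_arr, sem_spec_lat, sem_spec_mu.
Qed.

Lemma sem_shift M k c n s :
  sem n s (shift k c M) = sem n (fun x => if x <? c then s x else s (x + k)) M.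
Proof.
  revert c n s; induction M as [x|A IHA B IHB|A IHA|A IHA]; intros c n s; simpl.
  - destruct (x <? c); reflexivity.
  - rewrite IHA, IHB; auto.
  - destruct n; auto. rewrite IHA; auto.
  - assert (Hf : forall t, sem n (scons t s) (shift k (S c) A) =
                 sem n (scons t (fun x => if x <? c then s x else s (x + k))) A).
    { intros t. rewrite IHA. apply sem_ext_eq. intros [|x]; reflexivity. }
    rewrite (iter_ext _ _ n Cut Hf). apply Hf.
Qed.

Definition env_insert (c : nat) (v : tree) (s : nat -> tree) (x : nat) : tree :=
  if x <? c then s x else if x =? c then v else s (pred x).

Lemma sem_subst M c U s m n : wf U -> m <= n ->
  sem m s (subst c U M) = sem m (env_insert c (sem n (fun x => s (x + c)) U) s) M.
Proof.
  intros HU; revert c s m; induction M as [x|A IHA B IHB|A IHA|A IHA]; intros c s m Hm; simpl.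
  - unfold env_insert. destruct (x <? c); simpl; auto. destruct (Nat.eqb_spec x c); simpl; auto.
    subst. rewrite sem_shift. destruct (wf_sem_spec U HU) as [_ [_ CU]].
    rewrite <- (CU m n) by auto. reflexivity.
  - rewrite IHA, IHB; auto.
  - destruct m; auto. rewrite IHA by lia. reflexivity.
  - assert (Hf : forall t, sem m (scons t s) (subst (S c) U A) =
                 sem m (scons t (env_insert c (sem n (fun x => s (x + c)) U) s)) A).
    { intros t. rewrite IHA by auto. apply sem_ext_eq.
      intros [|x]; unfold env_insert; simpl; auto.
      destruct (Nat.ltb_spec x c), (Nat.ltb_spec (S x) (S c)); try lia; auto.
      destruct (Nat.eqb_spec x c), (Nat.eqb_spec (S x) (S c)); try lia; auto.
      - apply sem_ext_eq. intros y. simpl. rewrite Nat.add_succ_r. reflexivity.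
      - destruct x; [lia | reflexivity]. }
    rewrite (iter_ext _ _ m Cut Hf). apply Hf.
Qed.

Lemma sem_subst0 A U s n : wf U -> sem n s (subst0 A U) = sem n (scons (sem n s U) s) A.
Proof.
  intros HU. unfold subst0. rewrite (sem_subst A 0 U s n n) by auto. apply sem_ext_eq.
  intros [|x]; unfold env_insert; simpl; auto.
  apply sem_ext_eq. intros y. rewrite Nat.add_0_r. reflexivity.
Qed.

Lemma sem_top n s : sem n s top = ttop n.
Proof. apply (proj1 (proj1 (wf_sem_spec top wf_top))). reflexivity. Qed.

Lemma eqty_sem M N : eqty d M N -> forall n s, sem n s M = sem n s N.
Proof.
  induction 1; intros n s.
  - reflexivity.
  - auto.
  - congruence.
  - destruct n; simpl; auto. rewrite IHeqty; auto.
  - simpl. rewrite IHeqty1, IHeqty2; auto.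
  - change (tarr n (sem n s A) (sem n s top) = sem n s top). rewrite sem_top. apply tarr_ttop.
  - destruct (wf_mu_inv A H) as [HA HP]. destruct (wf_sem_spec A HA) as [_ [GA CA]].
    rewrite sem_subst0 by auto. symmetry. apply sem_mu_fix; auto.
  - destruct (wf_mu_inv C H0) as [HC HP]. destruct (wf_sem_spec C HC) as [_ [GC CC]].
    apply sem_mu_unique; auto. unfold body_map. rewrite <- sem_subst0 by auto. auto.
  - destruct n; simpl; auto. rewrite H. apply later_distr_tarr.
Qed.

Lemma top_variant_sem M : wf M -> top_variant M -> forall n s, sem n s M = ttop n.
Proof. intros HM H. exact (proj1 (proj1 (wf_sem_spec M HM)) H). Qed.

Fixpoint tail_bullets (M : ty) : nat :=
  match M with
  | TVar _ => 0
  | TArr _ B => tail_bullets B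
  | TLat A => S (tail_bullets A)
  | TMu A => tail_bullets A
  end.

Lemma sem_free_tail_not_top M j b N s : wf M -> tinfo_of M = TFree j b ->
  (forall k, N <= k -> trunc k (s j) <> ttop k) ->
  forall n, N + tail_bullets M <= n -> sem n s M <> ttop n.
Proof.
  intros HM; revert j b s;
    induction HM as [x|A B HA IHA HB IHB|A HA IHA|A HA IHA HP]; intros j b s Ht Hs n Hn.
  - injection Ht as -> _. apply Hs. simpl in Hn; lia.
  - rewrite tinfo_of_arr in Ht. simpl. intros E.
    destruct (tarr_cases n (sem n s A) (sem n s B)) as [[E1 _]|[_ E2]].
    + eapply IHB; eauto.
    + rewrite E2 in E. eapply ttop_not_node; eauto.
  - rewrite tinfo_of_lat in Ht. destruct (tinfo_of A) as [g|j' b'] eqn:E; try discriminate.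
    injection Ht as ->. simpl in Hn. destruct n as [|m]; [lia|].
    simpl. intros E2. apply tlater_eq_ttop in E2. revert E2. eapply IHA; eauto. lia.
  - rewrite tinfo_of_mu in Ht. destruct (tinfo_of A) as [g|[|j'] b'] eqn:E; try discriminate.
    injection Ht as -> ->. destruct (wf_sem_spec A HA) as [_ [GA CA]].
    rewrite <- sem_mu_fix by auto. unfold body_map. eapply IHA; eauto.
Qed.

Lemma proper_tail_free M k : tinfo_of M = TFree k false -> ~ proper k M.
Proof.
  revert k; induction M as [x|A IHA B IHB|A IHA|A IHA]; intros k Ht Hp; simpl in Hp.
  - injection Ht as ->. auto.
  - rewrite tinfo_of_arr in Ht. destruct Hp as [[_ P]|P].
    + eapply IHB; eauto.
    + change (tinfo_of B = TBound true) in P. congruence.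
  - rewrite tinfo_of_lat in Ht. destruct (tinfo_of A); discriminate.
  - destruct Hp as [P|P].
    + rewrite tinfo_of_mu in Ht. destruct (tinfo_of A) as [g|[|j] b] eqn:E; try discriminate.
      injection Ht as ->. subst b. eapply IHA; eauto.
    + change (tinfo_of (TMu A) = TBound true) in P. congruence.
Qed.

Lemma wf_tail_not_bound_false M : wf M -> tinfo_of M <> TBound false.
Proof.
  induction 1; rewrite ?tinfo_of_arr, ?tinfo_of_lat, ?tinfo_of_mu; auto.
  - discriminate.
  - destruct (tinfo_of A); congruence.
  - destruct (tinfo_of A) as [g|[|j] [|]] eqn:E; try congruence.
    intros _. eapply proper_tail_free; eauto.
Qed.

Lemma leaf_not_ttop x k : trunc k (Leaf x) <> ttop k.
Proof. destruct k; discriminate. Qed.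

Lemma sem_ttop_top_variant M : wf M -> (forall n, sem n Leaf M = ttop n) -> top_variant M.
Proof.
  intros HM H. apply top_variantE.
  destruct (tinfo_of M) as [[|]|j b] eqn:E; auto.
  - exfalso; eapply wf_tail_not_bound_false; eauto.
  - exfalso. eapply (sem_free_tail_not_top M j b 0 Leaf); eauto.
    intros k _; apply leaf_not_ttop.
Qed.

Lemma eqty_lat_arr_top_variant A B C : wf A -> wf C ->
  eqty d (TLat A) (TArr B C) -> top_variant C -> top_variant A.
Proof.
  intros HA HC H TC. apply sem_ttop_top_variant; auto. intros n.
  pose proof (eqty_sem _ _ H (S n) Leaf) as E. simpl in E.
  rewrite (top_variant_sem C HC TC), tarr_ttop in E. apply (tlater_eq_ttop d), E.
Qed.

End Semantics.

(* Without distribution, a bullet is never interpreted as a [Node]. *)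
Lemma cong_lat_arr_top_variant A B C : wf C -> cong (TLat A) (TArr B C) -> top_variant C.
Proof.
  intros HC H. apply (sem_ttop_top_variant false); auto.
  assert (HC1 : forall n, sem false (S n) Leaf C = ttop (S n)).
  { intros n. pose proof (eqty_sem _ _ _ H (S n) Leaf) as E. simpl in E.
    destruct (tarr_cases (S n) (sem false (S n) Leaf B) (sem false (S n) Leaf C))
      as [[E1 _]|[_ E2]]; [exact E1 | rewrite E2 in E; discriminate]. }
  intros n. destruct (wf_sem_spec false C HC) as [_ [_ CC]].
  rewrite <- (CC n (S n)), HC1 by lia. apply trunc_ttop; lia.
Qed.

Lemma cong_lat_arr A B C : wf A -> wf B -> wf C ->
  cong (TLat A) (TArr B C) -> cong A C /\ cong C top.
Proof.
  intros HA HB HC H.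
  assert (TC := cong_lat_arr_top_variant A B C HC H).
  apply top_variants_eqty; auto. exact (eqty_lat_arr_top_variant false A B C HA HC H TC).
Qed.

Definition is_top_variant (M : ty) : bool :=
  match tinfo_of M with TBound true => true | _ => false end.

Lemma is_top_variantP M : is_top_variant M = true <-> top_variant M.
Proof.
  rewrite top_variantE. unfold is_top_variant.
  destruct (tinfo_of M) as [[|]|]; split; congruence.
Qed.

Lemma is_top_variant_arr A B : is_top_variant (TArr A B) = is_top_variant B.
Proof. reflexivity. Qed.

Lemma is_top_variant_lat A : is_top_variant (TLat A) = is_top_variant A.
Proof. unfold is_top_variant. rewrite tinfo_of_lat. destruct (tinfo_of A); auto. Qed.

Lemma wf_tail_free M : wf M -> is_top_variant M = false -> exists i b, tinfo_of M = TFree i b.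
Proof.
  intros HM T. pose proof (wf_tail_not_bound_false M HM). unfold is_top_variant in T.
  destruct (tinfo_of M) as [[|]|i b]; try discriminate; try congruence. eauto.
Qed.

Lemma is_top_variant_subst M k U : wf U -> is_top_variant U = false ->
  is_top_variant (subst k U M) = is_top_variant M.
Proof.
  intros HU T. destruct (wf_tail_free U HU T) as [i [b' E]].
  unfold is_top_variant. rewrite tinfo_of_subst. destruct (tinfo_of M) as [g|j b]; auto.
  destruct (j <? k); auto. destruct (j =? k); auto. rewrite E. reflexivity.
Qed.

Lemma eqty_is_top_variant d M N : eqty d M N -> is_top_variant M = is_top_variant N.
Proof.
  intros H. destruct (eqty_wf _ _ _ H) as [HM HN].
  assert (Hs := eqty_sem d M N H).
  assert (Himp : forall P Q, wf P -> wf Q -> (forall n s, sem d n s P = sem d n s Q) ->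
            is_top_variant P = true -> is_top_variant Q = true).
  { intros P Q HP HQ Hpq TP. apply is_top_variantP, (sem_ttop_top_variant d); auto.
    intros n. rewrite <- Hpq. apply top_variant_sem, is_top_variantP; auto. }
  destruct (is_top_variant M) eqn:TM, (is_top_variant N) eqn:TN; auto.
  - enough (is_top_variant N = true) by congruence. apply (Himp M); auto.
  - enough (is_top_variant M = true) by congruence. apply (Himp N); auto.
Qed.

(** * Guarded types and unbulleting *)

(* Top-variant subterms are skipped: they equal [top], which hides all variables. *)
Fixpoint exposed (M : ty) (j : nat) : Prop :=
  is_top_variant M = false /\
  match M with
  | TVar x => x = j
  | TLat _ => False
  | TArr A B => exposed A j \/ exposed B j
  | TMu C => exposed C (S j)
  end.

Definition guarded (M : ty) : Prop := forall j, ~ exposed M j.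

Lemma proper_not_exposed M j : proper j M -> ~ exposed M j.
Proof.
  revert j; induction M as [x|A IHA B IHB|A IHA|A IHA]; intros j Hp [T Hh]; simpl in Hp.
  - auto.
  - destruct Hp as [[P1 P2]|P].
    + destruct Hh; [eapply IHA | eapply IHB]; eauto.
    + apply is_top_variantP in P. rewrite is_top_variant_arr in T. congruence.
  - exact Hh.
  - destruct Hp as [P|P].
    + eapply IHA; eauto.
    + apply is_top_variantP in P. congruence.
Qed.

Lemma guarded_arr A B :
  guarded (TArr A B) -> is_top_variant B = false -> guarded A /\ guarded B.
Proof. intros H T; split; intros j Hj; apply (H j); simpl; auto. Qed.

Lemma guarded_mu C :
  guarded (TMu C) -> proper 0 C -> is_top_variant (TMu C) = false -> guarded C.
Proof. intros H P T [|j] Hj; [eapply proper_not_exposed | apply (H j); split]; eauto. Qed.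

(* A [mu] is unrolled once so that the bullets guarding its body become visible. *)
Fixpoint unbullet (M : ty) : ty :=
  if is_top_variant M then top else
  match M with
  | TVar x => TVar x
  | TLat A => A
  | TArr A B => TArr (unbullet A) (unbullet B)
  | TMu C => subst0 (unbullet C) (TMu C)
  end.

Lemma unbulletE M : unbullet M = if is_top_variant M then top else
  match M with
  | TVar x => TVar x
  | TLat A => A
  | TArr A B => TArr (unbullet A) (unbullet B)
  | TMu C => subst0 (unbullet C) (TMu C)
  end.
Proof. destruct M; reflexivity. Qed.

Lemma wf_unbullet M : wf M -> wf (unbullet M).
Proof.
  induction 1; rewrite unbulletE; destruct (is_top_variant _); try apply wf_top.
  - constructor.
  - constructor; auto.
  - auto.
  - apply wf_subst; auto. constructor; auto.
Qed.

Lemma subst_unbullet M k U : wf U -> is_top_variant U = false -> ~ exposed M k ->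
  subst k U (unbullet M) = unbullet (subst k U M).
Proof.
  revert k; induction M as [x|A IHA B IHB|A IHA|A IHA]; intros k HU T Hh;
    rewrite (unbulletE (subst k U _)), (is_top_variant_subst _ k U HU T), unbulletE;
    match goal with |- context [is_top_variant ?X] => destruct (is_top_variant X) eqn:Tm end;
    auto.
  - simpl. assert (x <> k) by (intros E; apply Hh; split; auto).
    nat_cases.
  - simpl. rewrite IHA, IHB; auto; intros Hx; apply Hh; split; auto.
  - simpl subst at 2. rewrite subst_subst0, IHA; auto.
    intros Hx; apply Hh; split; auto.
Qed.

Lemma unbullet_unfold A : wf (TMu A) -> unbullet (subst0 A (TMu A)) = unbullet (TMu A).
Proof.
  intros H. assert (T := eqty_is_top_variant _ _ _ (eq_unfold false A H (wf_unfold A H))).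
  destruct (is_top_variant (TMu A)) eqn:TT.
  - rewrite (unbulletE (TMu A)), (unbulletE (subst0 A (TMu A))), <- T, TT. reflexivity.
  - rewrite (unbulletE (TMu A)), TT. unfold subst0. symmetry. apply subst_unbullet; auto.
    apply proper_not_exposed, wf_mu_inv, H.
Qed.

Lemma unbullet_lat d X : wf X -> eqty d (unbullet (TLat X)) X.
Proof.
  intros HX. rewrite unbulletE, is_top_variant_lat. destruct (is_top_variant X) eqn:T.
  - apply eq_sym, top_variant_eqty_top, is_top_variantP; auto.
  - apply eq_refl; auto.
Qed.

Lemma lat_top_eqty_top_variant d M : wf M -> is_top_variant M = true -> eqty d (TLat top) M.
Proof.
  intros HM T. eapply eq_trans; [apply eq_sym, top_unfold |].
  apply eq_sym, top_variant_eqty_top, is_top_variantP; auto.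
Qed.

Lemma simeq_lat_unbullet M : wf M -> guarded M -> simeq (TLat (unbullet M)) M.
Proof.
  induction 1 as [x|A B HA IHA HB IHB|A HA IHA|A HA IHA HP]; intros Hg;
    rewrite unbulletE; destruct (is_top_variant _) eqn:T;
    try (apply lat_top_eqty_top_variant; [constructor; auto | exact T]).
  - exfalso. apply (Hg x). split; auto.
  - rewrite is_top_variant_arr in T. destruct (guarded_arr A B Hg T).
    eapply eq_trans; [apply eq_distr; auto; apply wf_unbullet; auto | apply eq_arr; auto].
  - apply eq_refl. constructor; auto.
  - assert (GA : guarded A) by (apply guarded_mu; auto).
    eapply eq_trans; [exact (eqty_subst _ _ _ (IHA GA) 0 (TMu A) ltac:(constructor; auto)) |].
    apply eq_sym, eq_unfold; [constructor; auto | apply wf_unfold; constructor; auto].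
Qed.

Fixpoint tree_exposed (t : tree) : Prop :=
  match t with
  | Leaf _ => True
  | Node a b => tree_exposed a \/ tree_exposed b
  | _ => False
  end.

Lemma ttop_not_exposed n : ~ tree_exposed (ttop n).
Proof. destruct n; simpl; auto. Qed.

Lemma later_distr_not_exposed t : ~ tree_exposed (later_distr t).
Proof. induction t; simpl; tauto. Qed.

Lemma tlater_not_exposed d t : ~ tree_exposed (tlater d t).
Proof. destruct d; [apply later_distr_not_exposed | simpl; auto]. Qed.

Lemma tarr_exposed n a b : tree_exposed (tarr n a b) -> tree_exposed a \/ tree_exposed b.
Proof. destruct (tarr_cases n a b) as [[_ ->]|[_ ->]]; simpl; auto. Qed.

Lemma later_distr_node t x y : later_distr t = Node x y -> ~ tree_exposed x /\ ~ tree_exposed y.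
Proof. destruct t; simpl; intros [= <- <-]; split; apply later_distr_not_exposed. Qed.

Definition env_not_top (N : nat) (s : nat -> tree) : Prop :=
  forall x k, N <= k -> trunc k (s x) <> ttop k.

Lemma leaf_env_not_top : env_not_top 0 Leaf.
Proof. intros x k _; apply leaf_not_ttop. Qed.

Section Exposure.

Variable d : bool.

Lemma guarded_sem_not_exposed M : wf M -> guarded M -> forall n s, ~ tree_exposed (sem d n s M).
Proof.
  induction 1 as [x|A B HA IHA HB IHB|A HA IHA|A HA IHA HP]; intros Hg n s.
  - exfalso. apply (Hg x). split; auto.
  - destruct (is_top_variant B) eqn:T.
    + rewrite top_variant_sem; [apply ttop_not_exposed | constructor; auto |].
      apply is_top_variantP; auto.
    + destruct (guarded_arr A B Hg T). simpl. intros Hh. apply tarr_exposed in Hh.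
      destruct Hh; [eapply IHA | eapply IHB]; eauto.
  - destruct n; simpl; auto. apply tlater_not_exposed.
  - destruct (is_top_variant (TMu A)) eqn:T.
    + rewrite top_variant_sem; [apply ttop_not_exposed | constructor; auto |].
      apply is_top_variantP; auto.
    + destruct (wf_sem_spec d A HA) as [_ [GA CA]]. rewrite <- sem_mu_fix by auto.
      apply IHA. apply guarded_mu; auto.
Qed.

Lemma exposed_sem M j N : wf M -> exposed M j -> exists N', forall s,
  env_not_top N s -> (forall k, N <= k -> tree_exposed (trunc k (s j))) ->
  forall n, N' <= n -> tree_exposed (sem d n s M).
Proof.
  intros HM; revert j N; induction HM as [x|A B HA IHA HB IHB|A HA IHA|A HA IHA HP];
    intros j N [T Hh].
  - subst. exists N. intros s _ Hs n Hn. apply Hs, Hn.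
  - destruct Hh as [H1|H2].
    + rewrite is_top_variant_arr in T. destruct (wf_tail_free B HB T) as [jb [bb E]].
      destruct (IHA j N H1) as [N' HN']. exists (N' + (N + tail_bullets B)).
      intros s Hg Hs n Hn. simpl.
      assert (Hb : sem d n s B <> ttop n).
      { apply (sem_free_tail_not_top d B jb bb N s); auto; lia. }
      destruct (tarr_cases n (sem d n s A) (sem d n s B)) as [[? _]|[_ ->]]; [congruence |].
      left. apply HN'; auto; lia.
    + destruct (IHB j N H2) as [N' HN']. exists N'. intros s Hg Hs n Hn. simpl.
      destruct (tarr_cases n (sem d n s A) (sem d n s B)) as [[_ ->]|[_ ->]]; simpl; auto.
  - destruct Hh.
  - assert (HM : wf (TMu A)) by (constructor; auto).
    destruct (wf_tail_free (TMu A) HM T) as [j0 [b0 E]].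
    destruct (wf_sem_spec d A HA) as [_ [GA CA]].
    destruct (wf_sem_spec d (TMu A) HM) as [_ [_ CM]].
    destruct (IHA (S j) (N + tail_bullets (TMu A)) Hh) as [N' HN']. exists N'.
    intros s Hg Hs n Hn. rewrite <- sem_mu_fix by auto. apply HN'; auto.
    + intros [|x] k Hk; [change (trunc k (sem d n s (TMu A)) <> ttop k) | apply Hg; lia].
      destruct (le_lt_dec k n).
      * rewrite CM by auto. apply (sem_free_tail_not_top d (TMu A) j0 b0 N s); auto.
      * rewrite (trunc_id_le _ n k) by (apply trunc_sem || lia). intros E2.
        assert (E3 := trunc_sem d (TMu A) n s). rewrite E2, trunc_ttop in E3 by lia.
        apply ttop_inj in E3. lia.
    + intros k Hk. apply Hs. lia.
Qed.

Lemma guarded_of_sem M N : wf M ->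
  (forall n, N <= n -> ~ tree_exposed (sem d n Leaf M)) -> guarded M.
Proof.
  intros HM HnM j Hj. destruct (exposed_sem M j 0 HM Hj) as [N' HN'].
  apply (HnM (N + N')); [lia |].
  apply HN'; [apply leaf_env_not_top | intros; simpl; auto | lia].
Qed.

Lemma eqty_guarded M N : eqty d M N -> guarded M -> guarded N.
Proof.
  intros H Hg. destruct (eqty_wf _ _ _ H) as [HM HN].
  apply (guarded_of_sem N 0 HN). intros n _.
  rewrite <- (eqty_sem d M N H). apply guarded_sem_not_exposed; auto.
Qed.

Lemma eqty_unbullet M N : eqty d M N -> guarded M -> eqty d (unbullet M) (unbullet N).
Proof.
  induction 1; intros Hg.
  - apply eq_refl, wf_unbullet; auto.
  - apply eq_sym, IHeqty. eapply eqty_guarded; eauto. apply eq_sym; auto.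
  - eapply eq_trans; eauto. apply IHeqty2. eapply eqty_guarded; eauto.
  - destruct (eqty_wf _ _ _ H) as [HA HB].
    eapply eq_trans; [apply unbullet_lat; auto |].
    eapply eq_trans; [eauto | apply eq_sym, unbullet_lat; auto].
  - assert (T := eqty_is_top_variant _ _ _ (eq_arr d A B C D H H0)).
    rewrite (unbulletE (TArr A B)), (unbulletE (TArr C D)), <- T.
    destruct (is_top_variant (TArr A B)) eqn:TT; [apply eq_refl, wf_top |].
    rewrite is_top_variant_arr in TT. destruct (guarded_arr A B Hg TT). apply eq_arr; auto.
  - rewrite (unbulletE (TArr A top)), (unbulletE top). apply eq_refl, wf_top.
  - rewrite unbullet_unfold by auto. apply eq_refl, wf_unbullet; auto.
  - assert (T := eqty_is_top_variant _ _ _ (eq_contract d A C H H0 H1 H2 H3)).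
    destruct (is_top_variant A) eqn:TA.
    + rewrite (unbulletE A), (unbulletE (TMu C)), <- T, TA. apply eq_refl, wf_top.
    + rewrite (unbulletE (TMu C)), <- T.
      eapply eq_trans; [apply IHeqty; auto |].
      unfold subst0. rewrite <- subst_unbullet; auto.
      * apply eqty_subst_r; [apply wf_unbullet, wf_mu_inv, H0 | apply eq_contract; auto].
      * apply proper_not_exposed; auto.
  - rewrite (unbulletE (TArr (TLat A) (TLat B))), is_top_variant_arr, is_top_variant_lat.
    destruct (is_top_variant B) eqn:TB.
    + rewrite unbulletE, is_top_variant_lat. simpl is_top_variant. rewrite is_top_variant_arr, TB.
      apply eq_refl, wf_top.
    + eapply eq_trans; [apply unbullet_lat; constructor; auto |].
      apply eq_arr; apply eq_sym, unbullet_lat; auto.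
Qed.

Lemma eqty_lat_inv X Y : eqty d (TLat X) (TLat Y) -> eqty d X Y.
Proof.
  intros H. destruct (eqty_wf _ _ _ H) as [HX HY].
  apply wf_lat_inv in HX. apply wf_lat_inv in HY.
  assert (Hg : guarded (TLat X)) by (intros j [_ []]).
  eapply eq_trans; [apply eq_sym, unbullet_lat; auto |].
  eapply eq_trans; [apply eqty_unbullet; eauto | apply unbullet_lat; auto].
Qed.

End Exposure.

Lemma simeq_lat_arr_guarded A B C : wf A -> wf B -> wf C ->
  simeq (TLat A) (TArr B C) -> is_top_variant C = false -> guarded B /\ guarded C.
Proof.
  intros HA HB HC H TC. destruct (wf_tail_free C HC TC) as [jc [bc Ec]].
  assert (Hnode : forall n, tail_bullets C <= n ->
            later_distr (sem true n Leaf A) = Node (sem true (S n) Leaf B) (sem true (S n) Leaf C)).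
  { intros n Hn. pose proof (eqty_sem _ _ _ H (S n) Leaf) as E. simpl in E. rewrite E.
    destruct (tarr_cases (S n) (sem true (S n) Leaf B) (sem true (S n) Leaf C))
      as [[E1 _]|[_ ->]]; auto.
    exfalso. revert E1. apply (sem_free_tail_not_top true C jc bc 0 Leaf); auto.
    intros k _; apply leaf_not_ttop. }
  split; apply (guarded_of_sem true _ (S (tail_bullets C))); auto; intros [|n] Hn; try lia;
    apply (later_distr_node _ _ _ (Hnode n ltac:(lia))).
Qed.

Lemma simeq_lat_arr A B C : wf A -> wf B -> wf C -> simeq (TLat A) (TArr B C) ->
  (simeq A C /\ simeq C top) \/
  (exists D E : ty, wf D /\ wf E /\
     simeq A (TArr D E) /\ simeq (TLat D) B /\ simeq (TLat E) C).
Proof.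
  intros HA HB HC H. destruct (is_top_variant C) eqn:TC.
  - left. apply is_top_variantP in TC.
    apply top_variants_eqty; auto. exact (eqty_lat_arr_top_variant true A B C HA HC H TC).
  - right. destruct (simeq_lat_arr_guarded A B C HA HB HC H TC) as [GB GC].
    exists (unbullet B), (unbullet C).
    repeat split; auto using wf_unbullet, simeq_lat_unbullet.
    apply (eqty_lat_inv true). eapply eq_trans; [exact H |].
    eapply eq_trans; [apply eq_arr; apply eq_sym, simeq_lat_unbullet; auto |].
    apply eq_sym, eq_distr; auto using wf_unbullet.
Qed.

Theorem proposition4 (A B C : ty) :
  wf A -> wf B -> wf C ->
  (cong (TLat A) (TArr B C) -> cong A C /\ cong C top) /\
  (simeq (TLat A) (TArr B C) ->
     (simeq A C /\ simeq C top) \/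
     (exists D E : ty, wf D /\ wf E /\
        simeq A (TArr D E) /\ simeq (TLat D) B /\ simeq (TLat E) C)).
Proof.
  intros HA HB HC. split; [apply cong_lat_arr | apply simeq_lat_arr]; auto.
Qed.
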